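(* Let $S$ be a $\Gamma$-hemiring. If $\mu$ is a prime fuzzy h-ideal of $S$, then for all $x,y\in S$, $\inf_{s\in S,\ \alpha,\gamma\in\Gamma}\mu(x\alpha s\gamma y)=\max\{\mu(x),\mu(y)\}$. Conversely, if $\mu$ is a fuzzy h-ideal of $S$ with $\operatorname{Im}\mu=\{1,t\}$ for some $t\in[0,1)$ such that $\inf_{s\in S,\ \alpha,\gamma\in\Gamma}\mu(x\alpha s\gamma y)=\max\{\mu(x),\mu(y)\}$ for all $x,y\in S$, then $\mu$ is a prime fuzzy h-ideal of $S$.
   Context: A $\Gamma$-hemiring is a pair of additive commutative semigroups with zero $S$ and $\Gamma$ with a map $S\times\Gamma\times S\to S$, $(a,\alpha,b)\mapsto a\alpha b$, such that for all $a,b,c\in S$, $\alpha,\beta\in\Gamma$: $(a+b)\alpha c=a\alpha c+b\alpha c$; $a\alpha(b+c)=a\alpha b+a\alpha c$; $a(\alpha+\beta)b=a\alpha b+a\beta b$; $a\alpha(b\beta c)=(a\alpha b)\beta c$; $0\alpha a=0=a\alpha0$; $a0b=0=b0a$. A fuzzy h-ideal of $S$ is a map $\mu:S\to[0,1]$, not identically $0$, such that for all $x,y,a,b,z\in S$, $\gamma\in\Gamma$: $\mu(x+y)\ge\min\{\mu(x),\mu(y)\}$; $\mu(x\gamma y)\ge\mu(x)$ and $\mu(x\gamma y)\ge\mu(y)$; $x+a+z=b+z$ implies $\mu(x)\ge\min\{\mu(a),\mu(b)\}$. For fuzzy subsets $\sigma,\theta$, the h-product is $(\sigma\Gamma_h\theta)(x)=\sup\min\{\sigma(a_1),\sigma(a_2),\theta(b_1),\theta(b_2)\}$,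 the supremum over all $z,a_1,a_2,b_1,b_2\in S$, $\gamma,\delta\in\Gamma$ with $x+a_1\gamma b_1+z=a_2\delta b_2+z$, and $0$ if no such expression exists. Inclusion $\sigma\subseteq\mu$ means $\sigma(x)\le\mu(x)$ for all $x$. A fuzzy h-ideal $\mu$ is prime if $\mu$ is not constant and for any fuzzy h-ideals $\sigma,\theta$ of $S$, $\sigma\Gamma_h\theta\subseteq\mu$ implies $\sigma\subseteq\mu$ or $\theta\subseteq\mu$. $\operatorname{Im}\mu$ is the image of $\mu$. *)

From HB Require Import structures.
From mathcomp Require Import all_boot all_order all_algebra.
From mathcomp Require Import all_classical all_reals.
Set Implicit Arguments. Unset Strict Implicit. Unset Printing Implicit Defensive.
Import Order.TTheory GRing.Theory Num.Theory.
Local Open Scope classical_set_scope.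
Local Open Scope ring_scope.

Record GammaHemiring (S G : Type) := {
  sadd : S -> S -> S;
  szero : S;
  gadd : G -> G -> G;
  gzero : G;
  gmul : S -> G -> S -> S;
  saddA : forall a b c, sadd a (sadd b c) = sadd (sadd a b) c;
  saddC : forall a b, sadd a b = sadd b a;
  sadd0 : forall a, sadd a szero = a;
  gaddA : forall a b c, gadd a (gadd b c) = gadd (gadd a b) c;
  gaddC : forall a b, gadd a b = gadd b a;
  gadd0 : forall a, gadd a gzero = a;
  gmulDl : forall a b c al, gmul (sadd a b) al c = sadd (gmul a al c) (gmul b al c);
  gmulDr : forall a b c al, gmul a al (sadd b c) = sadd (gmul a al b) (gmul a al c);
  gmulDm : forall a b al be, gmul a (gadd al be) b = sadd (gmul a al b) (gmul a be b);
  gmulA : forall a b c al be, gmul a al (gmul b be c) = gmul (gmul a al b) be c;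
  gmul0l : forall a al, gmul szero al a = szero;
  gmul0r : forall a al, gmul a al szero = szero;
  gmul0m : forall a b, gmul a gzero b = szero /\ gmul b gzero a = szero
}.

Section Fuzzy.
Variables (R : realType) (S G : Type) (H : GammaHemiring S G).

Local Notation "a + b" := (sadd H a b).
Local Notation "a * al * b" := (gmul H a al b).

Definition fuzzy_subset (mu : S -> R) : Prop := forall x, 0 <= mu x <= 1.

Definition fuzzy_h_ideal (mu : S -> R) : Prop :=
  fuzzy_subset mu /\
  (exists x, mu x != 0) /\
  (forall x y, Num.min (mu x) (mu y) <= mu (x + y)) /\
  (forall x y (ga : G), mu x <= mu (x * ga * y) /\ mu y <= mu (x * ga * y)) /\
  (forall x a b z, x + a + z = b + z -> Num.min (mu a) (mu b) <= mu x).

(* h-product; sup of the empty set is 0 in MathComp-Analysis (lemma sup0) *)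
Definition hprod (sigma theta : S -> R) (x : S) : R :=
  sup [set v | exists z a1 a2 b1 b2 (ga de : G),
         x + a1 * ga * b1 + z = a2 * de * b2 + z /\
         v = Num.min (Num.min (sigma a1) (sigma a2))
                     (Num.min (theta b1) (theta b2))].

Definition fincl (sigma mu : S -> R) : Prop := forall x, sigma x <= mu x.

Definition prime_fuzzy_h_ideal (mu : S -> R) : Prop :=
  fuzzy_h_ideal mu /\
  (exists x y, mu x != mu y) /\
  (forall sigma theta, fuzzy_h_ideal sigma -> fuzzy_h_ideal theta ->
     fincl (hprod sigma theta) mu -> fincl sigma mu \/ fincl theta mu).

Definition inf_xsy (mu : S -> R) (x y : S) : R :=
  inf [set v | exists s (al ga : G), v = mu ((x * al * s) * ga * y)].

End Fuzzy.

(** Level sets [L = {u | m <= mu u}] of a fuzzy h-ideal are crisp h-ideals, and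
    the fuzzy h-ideals [m * chi_I] of crisp h-ideals [I] transfer primality of [mu]
    to crisp ideals: if [I Gamma J <= L] then [I <= L] or [J <= L].  Take [m] the
    infimum of [mu (x alpha s gamma y)], so that [x Gamma S Gamma y <= L].  For the
    quotient ideals [I = {a | a Gamma S Gamma y <= L}] and [J = {b | I Gamma b <= L}],
    either [x] lies in [I <= L], or [J <= L] gives [S Gamma y <= L], and then
    [K = {c | S Gamma c <= L}] satisfies [K Gamma K <= L], so [y] lies in [K <= L].
    Either way [m <= max (mu x) (mu y)].  Conversely, if [mu] takes only the values
    [1] and [t], an inclusion [sigma Gamma_h theta <= mu] with [sigma x > mu x] and
    [theta y > mu y] fails at some [w = x alpha s gamma y] with [mu w = t], since
    [min (sigma (x alpha s)) (theta y) <= (sigma Gamma_h theta) w]. *)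
From mathcomp Require Import all_boot all_order all_algebra.
From mathcomp Require Import all_classical all_reals.
Import Order.TTheory GRing.Theory Num.Theory.
Local Open Scope classical_set_scope.
Local Open Scope ring_scope.

Set Implicit Arguments.
Unset Strict Implicit.
Unset Printing Implicit Defensive.

Lemma sup_le_nonneg (R : realType) (E : set R) (b : R) :
  0 <= b -> ubound E b -> sup E <= b.
Proof.
move=> b0 Eb; have [E0|/set0P/negP/negbNE/eqP->] := pselect (E !=set0).
  exact: ge_sup.
by rewrite sup0.
Qed.

Section FuzzyHIdeals.
Variables (R : realType) (S G : Type) (H : GammaHemiring S G).
Local Notation "a + b" := (sadd H a b).
Local Notation "a * al * b" := (gmul H a al b).

Record h_ideal (I : S -> Prop) : Prop := HIdeal {
  h_ideal0 : I (szero H);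
  h_idealD : forall a b, I a -> I b -> I (a + b);
  h_idealMr : forall a b ga, I a -> I (a * ga * b);
  h_idealMl : forall a b ga, I b -> I (a * ga * b);
  h_idealK : forall u a b z, u + a + z = b + z -> I a -> I b -> I u
}.

Section FuzzyHIdealFacts.
Variable mu : S -> R.
Hypothesis mu_ideal : fuzzy_h_ideal H mu.

Lemma fuzzy_h_ideal_ge0 u : 0 <= mu u.
Proof. by case: mu_ideal => /(_ u)/andP[]. Qed.

Lemma fuzzy_h_ideal_le1 u : mu u <= 1.
Proof. by case: mu_ideal => /(_ u)/andP[]. Qed.

Lemma fuzzy_h_idealMr a b ga : mu a <= mu (a * ga * b).
Proof. by have [_ [_ [_ [/(_ a b ga)[]]]]] := mu_ideal. Qed.

Lemma fuzzy_h_idealMl a b ga : mu b <= mu (a * ga * b).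
Proof. by have [_ [_ [_ [/(_ a b ga)[]]]]] := mu_ideal. Qed.

Lemma fuzzy_h_ideal_le0 u : mu u <= mu (szero H).
Proof. by have [<- _] := gmul0m H u u; exact: fuzzy_h_idealMr. Qed.

Definition level (m : R) (u : S) : Prop := m <= mu u.

Lemma h_ideal_level m u0 : level m u0 -> h_ideal (level m).
Proof.
have [_ [_ [muD [_ muK]]]] := mu_ideal.
move=> mu0; split; rewrite /level.
- exact: le_trans mu0 (fuzzy_h_ideal_le0 u0).
- by move=> a b ma mb; apply: le_trans (muD a b); rewrite le_min ma.
- by move=> a b ga ma; apply: le_trans ma (fuzzy_h_idealMr _ _ _).
- by move=> a b ga mb; apply: le_trans mb (fuzzy_h_idealMl _ _ _).
- by move=> u a b z e ma mb; apply: le_trans (muK _ _ _ _ e); rewrite le_min ma.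
Qed.

End FuzzyHIdealFacts.

Section Quotients.
Variable P : S -> Prop.
Hypothesis P_ideal : h_ideal P.

Definition lquot (B : S -> Prop) (a : S) : Prop :=
  forall b de, B b -> P (a * de * b).

Definition rquot (A : S -> Prop) (b : S) : Prop :=
  forall a de, A a -> P (a * de * b).

Lemma h_ideal_lquot B :
  (forall a de b, B b -> B (a * de * b)) -> h_ideal (lquot B).
Proof.
case: P_ideal => P0 PD _ PMl PK BMl.
split; rewrite /lquot.
- by move=> b de _; rewrite gmul0l.
- by move=> a a' ha ha' b de Bb; rewrite gmulDl; apply: PD; [apply: ha|apply: ha'].
- by move=> a c ga ha b de Bb; rewrite -gmulA; apply: ha; apply: BMl.
- by move=> c a ga ha b de Bb; rewrite -gmulA; apply: PMl; apply: ha.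
move=> u a a' z e ha ha' b de Bb.
apply: (PK _ (a * de * b) (a' * de * b) (z * de * b)); [|exact: ha|exact: ha'].
by rewrite -!gmulDl e.
Qed.

Lemma h_ideal_rquot A :
  (forall a de b, A a -> A (a * de * b)) -> h_ideal (rquot A).
Proof.
case: P_ideal => P0 PD PMr _ PK AMr.
split; rewrite /rquot.
- by move=> a de _; rewrite gmul0r.
- by move=> b b' hb hb' a de Aa; rewrite gmulDr; apply: PD; [apply: hb|apply: hb'].
- by move=> b c ga hb a de Aa; rewrite gmulA; apply: PMr; apply: hb.
- by move=> c b ga hb a de Aa; rewrite gmulA; apply: hb; apply: AMr.
move=> u b b' z e hb hb' a de Aa.
apply: (PK _ (a * de * b) (a * de * b') (a * de * z)); [|exact: hb|exact: hb'].
by rewrite -!gmulDr e.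
Qed.

End Quotients.

Definition fuzzy_char (m : R) (I : S -> Prop) (u : S) : R :=
  if `[< I u >] then m else 0.

Lemma fuzzy_char_in m I u : I u -> fuzzy_char m I u = m.
Proof. by move=> Iu; rewrite /fuzzy_char asboolT. Qed.

Lemma fuzzy_char_notin m I u : ~ I u -> fuzzy_char m I u = 0.
Proof. by move=> Iu; rewrite /fuzzy_char asboolF. Qed.

Lemma fuzzy_char_ge0 m I u : 0 <= m -> 0 <= fuzzy_char m I u.
Proof. by rewrite /fuzzy_char; case: ifP. Qed.

Lemma fuzzy_h_ideal_char m I :
  0 < m <= 1 -> h_ideal I -> fuzzy_h_ideal H (fuzzy_char m I).
Proof.
move=> /andP[m0 m1] [I0 ID IMr IMl IK].
have c0 u : 0 <= fuzzy_char m I u by exact/fuzzy_char_ge0/ltW.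
have cI u : I u -> fuzzy_char m I u = m by exact: fuzzy_char_in.
have cN u : ~ I u -> fuzzy_char m I u = 0 by exact: fuzzy_char_notin.
split.
  by move=> u; rewrite c0 /=; have [/cI->|/cN->] := pselect (I u); rewrite ?ler01.
split; first by exists (szero H); rewrite cI // gt_eqF.
split.
  move=> x y; have [Ix|/cN->] := pselect (I x); last by rewrite ge_min c0.
  have [Iy|/cN->] := pselect (I y); last by rewrite ge_min c0 orbT.
  by rewrite !cI ?minxx //; apply: ID.
split.
  move=> x y ga; split.
    by have [Ix|/cN->//] := pselect (I x); rewrite !cI //; apply: IMr.
  by have [Iy|/cN->//] := pselect (I y); rewrite !cI //; apply: IMl.
move=> u a b z e; have [Ia|/cN->] := pselect (I a); last by rewrite ge_min c0.
have [Ib|/cN->] := pselect (I b); last by rewrite ge_min c0 orbT.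
by rewrite !cI ?minxx //; apply: IK e Ia Ib.
Qed.

Lemma hprod_char_le (mu : S -> R) m I J :
  fuzzy_h_ideal H mu ->
  (forall a b de, I a -> J b -> level mu m (a * de * b)) ->
  fincl (hprod H (fuzzy_char m I) (fuzzy_char m J)) mu.
Proof.
move=> mu_ideal IJ u; have [_ [_ [_ [_ muK]]]] := mu_ideal.
apply: sup_le_nonneg; first exact: fuzzy_h_ideal_ge0.
move=> _ [z [a1 [a2 [b1 [b2 [ga [de [e ->]]]]]]]].
have [[I1 [I2 [J1 J2]]]|notIJ] := pselect (I a1 /\ I a2 /\ J b1 /\ J b2).
  rewrite !fuzzy_char_in // !minxx.
  by apply: le_trans (muK _ _ _ _ e); rewrite le_min !IJ.
apply: le_trans (fuzzy_h_ideal_ge0 mu_ideal u).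
have [I1|/fuzzy_char_notin->] := pselect (I a1); last by rewrite !ge_min lexx.
have [I2|/fuzzy_char_notin->] := pselect (I a2); last by rewrite !ge_min lexx !orbT.
have [J1|/fuzzy_char_notin->] := pselect (J b1); last by rewrite !ge_min lexx !orbT.
have [J2|/fuzzy_char_notin->] := pselect (J b2); last by rewrite !ge_min lexx !orbT.
by case: notIJ.
Qed.

Lemma prime_level_subset (mu : S -> R) m I J :
  prime_fuzzy_h_ideal H mu -> 0 < m <= 1 -> h_ideal I -> h_ideal J ->
  (forall a b de, I a -> J b -> level mu m (a * de * b)) ->
  I `<=` level mu m \/ J `<=` level mu m.
Proof.
move=> [mu_ideal [_ mu_prime]] m01 hI hJ IJ.
have := mu_prime _ _ (fuzzy_h_ideal_char m01 hI) (fuzzy_h_ideal_char m01 hJ).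
case; first exact: hprod_char_le.
- by move=> le; left => a Ia; have := le a; rewrite fuzzy_char_in.
- by move=> le; right => b Jb; have := le b; rewrite fuzzy_char_in.
Qed.

Lemma prime_level (mu : S -> R) m x y :
  prime_fuzzy_h_ideal H mu -> 0 < m <= 1 ->
  (forall s al ga, level mu m ((x * al * s) * ga * y)) ->
  level mu m x \/ level mu m y.
Proof.
move=> mu_prime m01 xSy; have [mu_ideal _] := mu_prime.
pose P := level mu m.
have hP : h_ideal P := h_ideal_level mu_ideal (xSy x (gzero H) (gzero H)).
pose Sy b := exists s ga, b = s * ga * y.
have Sy_closed a de b : Sy b -> Sy (a * de * b).
  by case=> s [ga ->]; exists (a * de * s), ga; rewrite gmulA.
pose I := lquot P Sy.
have hI : h_ideal I := h_ideal_lquot hP Sy_closed.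
have hJ : h_ideal (rquot P I) := h_ideal_rquot hP (fun a de b => @h_idealMr _ hI a b de).
have [IP|JP] := prime_level_subset mu_prime m01 hI hJ (fun a b de Ia Jb => Jb a de Ia).
  by left; apply: IP => _ al [s [ga ->]]; rewrite gmulA; apply: xSy.
have yK : rquot P setT y by move=> a de _; apply: JP => c al Ic; apply: Ic; exists a, de.
have hK : h_ideal (rquot P setT) by apply: h_ideal_rquot.
have KK a b de (_ : rquot P setT a) (Kb : rquot P setT b) : P (a * de * b) by exact: Kb.
by right; case: (prime_level_subset mu_prime m01 hK hK KK) => /(_ y yK).
Qed.

Lemma inf_xsy_ge_max (mu : S -> R) x y :
  fuzzy_h_ideal H mu -> Num.max (mu x) (mu y) <= inf_xsy H mu x y.
Proof.
move=> mu_ideal; apply: lb_le_inf.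
  by exists (mu ((x * gzero H * x) * gzero H * y)), x, (gzero H), (gzero H).
move=> _ [s [al [ga ->]]]; rewrite ge_max fuzzy_h_idealMl // andbT.
exact: le_trans (fuzzy_h_idealMr mu_ideal x s al) (fuzzy_h_idealMr mu_ideal _ _ _).
Qed.

Lemma prime_inf_xsy (mu : S -> R) x y :
  prime_fuzzy_h_ideal H mu -> inf_xsy H mu x y = Num.max (mu x) (mu y).
Proof.
move=> mu_prime; have [mu_ideal _] := mu_prime.
apply/eqP; rewrite eq_le inf_xsy_ge_max // andbT leNgt; apply/negP => lt_max.
set m := inf_xsy H mu x y in lt_max.
have m_le s al ga : m <= mu ((x * al * s) * ga * y).
  apply: ge_inf; last by exists s, al, ga.
  by exists 0 => _ [s' [al' [ga' ->]]]; apply: fuzzy_h_ideal_ge0.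
have m01 : 0 < m <= 1.
  rewrite (le_trans (m_le x (gzero H) (gzero H))) ?fuzzy_h_ideal_le1 // andbT.
  by apply: le_lt_trans lt_max; rewrite le_max fuzzy_h_ideal_ge0.
by move: lt_max; case: (prime_level mu_prime m01 m_le) => le;
  rewrite ltNge le_max le ?orbT.
Qed.

Lemma hprod_ge_mul (sigma theta : S -> R) a b ga :
  fuzzy_h_ideal H sigma ->
  Num.min (sigma a) (theta b) <= hprod H sigma theta (a * ga * b).
Proof.
move=> sigma_ideal; rewrite /hprod; set E := [set v | _].
have Eab : E (Num.min (sigma a) (theta b)).
  exists (szero H), (szero H), a, b, b, ga, ga; split.
    by rewrite gmul0l !sadd0.
  by rewrite minxx (min_idPr (fuzzy_h_ideal_le0 sigma_ideal a)).
apply: (sup_upper_bound _ Eab); split; first by exists (Num.min (sigma a) (theta b)).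
exists 1 => _ [z [a1 [a2 [b1 [b2 [g [d [_ ->]]]]]]]].
by rewrite !ge_min fuzzy_h_ideal_le1.
Qed.

Lemma two_valued_prime (mu : S -> R) (t : R) :
  fuzzy_h_ideal H mu -> 0 <= t < 1 -> range mu = [set 1; t] ->
  (forall x y, inf_xsy H mu x y = Num.max (mu x) (mu y)) ->
  prime_fuzzy_h_ideal H mu.
Proof.
move=> mu_ideal /andP[_ t1] mu_range inf_max.
have mu_val u : mu u = 1 \/ mu u = t.
  have : range mu (mu u) by exists u.
  by rewrite mu_range; case=> ->; [left|right].
have [a _ mua] : range mu 1 by rewrite mu_range; left.
have [b _ mub] : range mu t by rewrite mu_range; right.
split=> //; split; first by exists a, b; rewrite mua mub gt_eqF.
have mu_t sigma u : fuzzy_subset sigma -> mu u < sigma u -> mu u = t.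
  move=> sigma01 lt; case: (mu_val u) => // mu1; move: lt.
  by rewrite mu1 ltNge; case/andP: (sigma01 u) => _ ->.
move=> sigma theta hs ht hprod_le.
have [|/existsNP[x /negP]] := pselect (fincl sigma mu); first by left.
rewrite -ltNge => ltx; right => y; rewrite leNgt; apply/negP => lty.
have mux := mu_t _ _ hs.1 ltx; have muy := mu_t _ _ ht.1 lty.
have [s [al [ga muw]]] : exists s al ga, mu ((x * al * s) * ga * y) = t.
  apply: contrapT => none; have : 1 <= inf_xsy H mu x y.
    apply: lb_le_inf; first by exists (mu ((x * gzero H * x) * gzero H * y)), x, (gzero H), (gzero H).
    move=> _ [s [al [ga ->]]]; case: (mu_val ((x * al * s) * ga * y)) => [->//|mu_w].
    by case: none; exists s, al, ga; exact: mu_w.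
  by rewrite inf_max mux muy maxxx leNgt t1.
have lt_sigma : t < sigma (x * al * s).
  by rewrite -mux (lt_le_trans ltx) ?(fuzzy_h_idealMr hs).
have lt_theta : t < theta y by rewrite -muy.
have := le_trans (@hprod_ge_mul sigma theta (x * al * s) y ga hs) (hprod_le _).
by rewrite muw ge_min !leNgt lt_sigma lt_theta.
Qed.

End FuzzyHIdeals.

Theorem proposition3p16 (R : realType) (S G : Type) (H : GammaHemiring S G) :
  (forall mu : S -> R, prime_fuzzy_h_ideal H mu ->
     forall x y, inf_xsy H mu x y = Num.max (mu x) (mu y)) /\
  (forall (mu : S -> R) (t : R), fuzzy_h_ideal H mu ->
     0 <= t < 1 ->
     range mu = [set 1; t] ->
     (forall x y, inf_xsy H mu x y = Num.max (mu x) (mu y)) ->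
     prime_fuzzy_h_ideal H mu).
Proof.
split=> [mu mu_prime x y|]; first exact: prime_inf_xsy.
exact: two_valued_prime.
Qed.
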